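(* Let $\mathbb{D}$ be a division ring, let $2\le m,n<\infty$, let $P$ be an $n\times m$ matrix over $\mathbb{D}$ with $\operatorname{rank}P=r$, and let $\mathcal{A}=\mathfrak{M}(\mathbb{D}, m, n, P)$. Then: (1) if $r\ge 2$, then $\mathcal{A}=\sum[\mathcal{A},\mathcal{A}][\mathcal{A},\mathcal{A}]$, i.e. every element of $\mathcal{A}$ is a finite sum of products of pairs of commutators; (2) if $r=1$, then $\mathcal{A}=\sum[\mathcal{A},\mathcal{A}][\mathcal{A},\mathcal{A}]$ if and only if $\mathbb{D}$ is not commutative.
   Context: $\mathfrak{M}(\mathbb{D}, m, n, P)$ denotes the ring of all $m\times n$ matrices over the division ring $\mathbb{D}$ with entrywise addition and multiplication $A\bullet B = APB$. The commutator is $[x,y]=x\bullet y-y\bullet x$; for subsets $X,Y$, $[X,Y]=\{[x,y]:x\in X,y\in Y\}$ and $XY=\{x\bullet y: x\in X, y\in Y\}$. $\sum[\mathcal{A},\mathcal{A}][\mathcal{A},\mathcal{A}]$ denotes the set of all finite sums of elements of $[\mathcal{A},\mathcal{A}][\mathcal{A},\mathcal{A}]$. *)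

From HB Require Import structures.
From mathcomp Require Import all_boot all_order all_algebra.
Set Implicit Arguments. Unset Strict Implicit. Unset Printing Implicit Defensive.
Import GRing.Theory.
Local Open Scope ring_scope.

Definition is_division_ring (D : unitRingType) : Prop :=
  forall x : D, x != 0 -> x \is a GRing.unit.

(* Rank of a matrix over a division ring, defined as the inner rank:
   the least k such that P factors as A *m B with A : p x k, B : k x q.
   Over a division ring this coincides with the row rank = column rank. *)
Definition mx_factors_through (D : pzRingType) (p q k : nat)
  (P : 'M[D]_(p, q)) : Prop :=
  exists (A : 'M[D]_(p, k)) (B : 'M[D]_(k, q)), P = A *m B.

Definition mx_rank_is (D : pzRingType) (p q : nat) (P : 'M[D]_(p, q))
  (r : nat) : Prop :=
  @mx_factors_through D p q r P /\ (forall k, (k < r)%N -> ~ @mx_factors_through D p q k P).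

(* The ring M(D, m, n, P): m x n matrices, product A • B = A P B. *)
Definition sprod (D : pzRingType) (m n : nat) (P : 'M[D]_(n, m))
  (A B : 'M[D]_(m, n)) : 'M[D]_(m, n) := A *m P *m B.

Definition scomm (D : pzRingType) (m n : nat) (P : 'M[D]_(n, m))
  (A B : 'M[D]_(m, n)) : 'M[D]_(m, n) := sprod P A B - sprod P B A.

Definition in_sum_comm_comm (D : pzRingType) (m n : nat) (P : 'M[D]_(n, m))
  (X : 'M[D]_(m, n)) : Prop :=
  exists s : seq ('M[D]_(m, n) * 'M[D]_(m, n) * 'M[D]_(m, n) * 'M[D]_(m, n)),
    X = \sum_(t <- s)
          sprod P (scomm P t.1.1.1 t.1.1.2) (scomm P t.1.2 t.2).

(* The sums of products of two commutators form an additive subgroup S of A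
   which, by the Leibniz rules [a b, c] = a [b, c] + [a, c] b, absorbs left
   multiplication of any product [p, s] [r, s] with a common s.  If K P L = 1
   with K : k x n and L : m x k, then Y |-> L Y K embeds the ring of k x k
   matrices into A; when this corner contains commutators [p, s], [r, s] with
   invertible product, the Peirce decomposition of X with respect to the
   idempotents L K P and P L K writes every X as an element of S.  Rank r >= 2
   gives a 2 x 2 corner, where [e10 - e01, e00] is an involution; rank 1 gives
   the corner D itself, where x y - y x is invertible unless D is commutative.
   Conversely, if P = A B has rank 1 and D is commutative, X |-> B X A is a
   multiplicative map to D that kills commutators and sends L K to 1. *)

From HB Require Import structures.
From mathcomp Require Import all_boot all_order all_algebra.
From Stdlib Require Import Classical.
Import GRing.Theory.
Local Open Scope ring_scope.
Set Implicit Arguments.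
Unset Strict Implicit.

Lemma peirce_decomposition (D : pzRingType) (m n : nat)
    (E : 'M[D]_m) (F : 'M[D]_n) (X : 'M[D]_(m, n)) :
  X = E *m X *m F + E *m X *m (1%:M - F)
      + (1%:M - E) *m X *m F + (1%:M - E) *m X *m (1%:M - F).
Proof.
rewrite -!mulmxDr -addrA -mulmxDr (addrC F) subrK !mulmx1.
by rewrite -mulmxDl (addrC E) subrK mul1mx.
Qed.

Lemma mx_sum_rank_one (D : pzRingType) (m n k : nat) (X : 'M[D]_(m, n)) :
  X = \sum_(l < n) X *m delta_mx l (0 : 'I_k.+1) *m delta_mx 0 l.
Proof.
under eq_bigr do rewrite -mulmxA mul_delta_mx.
by rewrite -mulmx_sumr -mx1_sum_delta mulmx1.
Qed.

Section SandwichRing.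
Variables (D : pzRingType) (m n : nat) (P : 'M[D]_(n, m)).
Implicit Types a b c p r s X Y : 'M[D]_(m, n).

Local Notation "a • b" := (sprod P a b) (at level 40, left associativity).
Local Notation "⟦ a , b ⟧" := (scomm P a b).
Local Notation S := (in_sum_comm_comm P).

Lemma in_sum_comm_comm0 : S 0.
Proof. by exists [::]; rewrite big_nil. Qed.

Lemma in_sum_comm_comm_prod a b c d : S (⟦a, b⟧ • ⟦c, d⟧).
Proof. by exists [:: (a, b, c, d)]; rewrite big_seq1. Qed.

Lemma in_sum_comm_commD X Y : S X -> S Y -> S (X + Y).
Proof. by move=> [s ->] [t ->]; exists (s ++ t); rewrite big_cat. Qed.

Lemma oppr_scomm a b : - ⟦a, b⟧ = ⟦b, a⟧.
Proof. exact: opprB. Qed.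

Lemma sprodNl a b : (- a) • b = - (a • b).
Proof. by rewrite /sprod !mulNmx. Qed.

Lemma in_sum_comm_commN X : S X -> S (- X).
Proof.
move=> [s ->]; exists [seq (t.1.1.2, t.1.1.1, t.1.2, t.2) | t <- s].
by rewrite big_map -sumrN; apply: eq_bigr => t _; rewrite -sprodNl oppr_scomm.
Qed.

Lemma in_sum_comm_commB X Y : S X -> S Y -> S (X - Y).
Proof. by move=> SX /in_sum_comm_commN; apply: in_sum_comm_commD. Qed.

Lemma in_sum_comm_comm_sum k (F : 'I_k -> 'M[D]_(m, n)) :
  (forall i, S (F i)) -> S (\sum_i F i).
Proof.
move=> SF; apply: big_ind => //.
  exact: in_sum_comm_comm0.
exact: in_sum_comm_commD.
Qed.

Lemma sprodA a b c : a • b • c = a • (b • c).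
Proof. by rewrite /sprod !mulmxA. Qed.

Lemma sprodBl a b c : (a - b) • c = a • c - b • c.
Proof. by rewrite /sprod !mulmxBl. Qed.

Lemma sprodBr a b c : a • (b - c) = a • b - a • c.
Proof. by rewrite /sprod !mulmxBr. Qed.

Lemma sprod_scommr a b c : a • ⟦b, c⟧ = ⟦a • b, c⟧ - ⟦a, c⟧ • b.
Proof. by rewrite /scomm sprodBr sprodBl !sprodA opprB addrA subrK. Qed.

Lemma sprod_scomml a b c : ⟦a, b⟧ • c = ⟦a, b • c⟧ - b • ⟦a, c⟧.
Proof. by rewrite /scomm sprodBr sprodBl !sprodA opprB addrA subrK. Qed.

(* a [p,s] [r,s] = [a p,s] [r,s] - [a,s] [p r,s] + [a,s] [p,s r]
                   - [a,s s] [p,r] + [s a,s] [p,r]. *)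
Lemma in_sum_comm_comm_lmul a p r s : S (a • (⟦p, s⟧ • ⟦r, s⟧)).
Proof.
have sas : s • ⟦a, s⟧ = ⟦s • a, s⟧.
  by rewrite sprod_scommr /scomm subrr /sprod !mul0mx subr0.
rewrite -sprodA (sprod_scommr a p s) sprodBl sprodA (sprod_scommr p r s).
rewrite sprodBr (sprod_scomml p s r) sprodBr -sprodA (sprod_scomml a s s) sas.
rewrite sprodBl.
by do !apply: in_sum_comm_commB; apply: in_sum_comm_comm_prod.
Qed.

Section Corner.
Variable k : nat.
Variables (K : 'M[D]_(k.+1, n)) (L : 'M[D]_(m, k.+1)).
Hypothesis KPL : K *m P *m L = 1%:M.

(* [El] and [Er] are idempotents; they are kept right-associated so that
   [mulKPLmx] applies after [-!mulmxA]. *)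
Local Notation corner Y := (L *m Y *m K).
Local Notation El := (L *m (K *m P)).
Local Notation Er := (P *m (L *m K)).

Lemma mulKPLmx j (M : 'M[D]_(k.+1, j)) : K *m (P *m (L *m M)) = M.
Proof. by rewrite !mulmxA KPL mul1mx. Qed.

Lemma sprod_corner (Y Z : 'M[D]_k.+1) : corner Y • corner Z = corner (Y *m Z).
Proof. by rewrite /sprod -!mulmxA mulKPLmx. Qed.

Lemma scomm_corner (Y Z : 'M[D]_k.+1) :
  ⟦corner Y, corner Z⟧ = corner (Y *m Z - Z *m Y).
Proof. by rewrite /scomm !sprod_corner mulmxBr mulmxBl. Qed.

Lemma mulKP_compl j (M : 'M[D]_(m, j)) : K *m (P *m ((1%:M - El) *m M)) = 0.
Proof. by rewrite mulmxBl mul1mx !mulmxBr -!mulmxA mulKPLmx subrr. Qed.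

Lemma mul_compl_PL j (M : 'M[D]_(k.+1, j)) : (1%:M - Er) *m (P *m (L *m M)) = 0.
Proof. by rewrite mulmxBl mul1mx -!mulmxA mulKPLmx subrr. Qed.

Lemma scomm_left_corner (V : 'M[D]_(m, k.+1)) :
  ⟦(1%:M - El) *m V *m K, L *m K⟧ = (1%:M - El) *m V *m K.
Proof. by rewrite /scomm /sprod -!mulmxA mulKPLmx mulKP_compl !mulmx0 subr0. Qed.

Lemma scomm_right_corner (W : 'M[D]_(k.+1, n)) :
  ⟦L *m K, L *m W *m (1%:M - Er)⟧ = L *m W *m (1%:M - Er).
Proof. by rewrite /scomm /sprod -!mulmxA mulKPLmx mul_compl_PL !mulmx0 subr0. Qed.

(* Off the corner, [(1 - El) x K] and [L y (1 - Er)] are themselves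
   commutators with [L K]; [X] is split into rank-one pieces [x y] to use it. *)
Lemma in_sum_comm_comm_off_corner X : S ((1%:M - El) *m X *m (1%:M - Er)).
Proof.
rewrite (mx_sum_rank_one k X) mulmx_sumr mulmx_suml.
apply: in_sum_comm_comm_sum => l.
set x := X *m _; set y := delta_mx _ _.
have -> : (1%:M - El) *m (x *m y) *m (1%:M - Er) =
    ⟦(1%:M - El) *m x *m K, L *m K⟧ • ⟦L *m K, L *m y *m (1%:M - Er)⟧.
  by rewrite scomm_left_corner scomm_right_corner /sprod -!mulmxA mulKPLmx.
exact: in_sum_comm_comm_prod.
Qed.

Section InvertibleCommutatorProduct.
Variables (P0 R0 S0 h : 'M[D]_k.+1).
Let U := P0 *m S0 - S0 *m P0.
Let W := R0 *m S0 - S0 *m R0.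
Hypotheses (hUW : h *m (U *m W) = 1%:M) (UWh : U *m W *m h = 1%:M).

Lemma in_sum_comm_comm_of_corner X : S X.
Proof.
have hUW_cancel j (M : 'M[D]_(k.+1, j)) : h *m (U *m (W *m M)) = M.
  by rewrite !mulmxA -(mulmxA h) hUW mul1mx.
have UWh_cancel j (M : 'M[D]_(k.+1, j)) : U *m (W *m (h *m M)) = M.
  by rewrite !mulmxA UWh mul1mx.
have cU : ⟦corner P0, corner S0⟧ = corner U by rewrite scomm_corner.
have cW : ⟦corner R0, corner S0⟧ = corner W by rewrite scomm_corner.
rewrite (peirce_decomposition El Er X).
apply: in_sum_comm_commD; last exact: in_sum_comm_comm_off_corner.
apply: in_sum_comm_commD; [apply: in_sum_comm_commD|].
- have -> : El *m X *m Er =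
      corner (K *m P *m X *m P *m L *m h)
        • (⟦corner P0, corner S0⟧ • ⟦corner R0, corner S0⟧).
    by rewrite cU cW !sprod_corner -!mulmxA hUW_cancel.
  exact: in_sum_comm_comm_lmul.
- have -> : El *m X *m (1%:M - Er) =
      ⟦corner P0, corner S0⟧
        • ⟦L *m K, L *m (W *m h *m K *m P *m X) *m (1%:M - Er)⟧.
    by rewrite scomm_right_corner cU /sprod -!mulmxA mulKPLmx UWh_cancel.
  exact: in_sum_comm_comm_prod.
- have -> : (1%:M - El) *m X *m Er =
      ⟦(1%:M - El) *m (X *m P *m L *m h *m U) *m K, L *m K⟧
        • ⟦corner R0, corner S0⟧.
    by rewrite scomm_left_corner cW /sprod -!mulmxA mulKPLmx hUW_cancel.
  exact: in_sum_comm_comm_prod.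
Qed.

End InvertibleCommutatorProduct.
End Corner.

End SandwichRing.

Section DivisionRingMatrices.
Variable D : unitRingType.
Hypothesis hD : is_division_ring D.

Lemma col_linv n (a : 'cV[D]_n) : a != 0 -> exists w : 'rV[D]_n, w *m a = 1%:M.
Proof.
move=> a_neq0; have [i ai_neq0] : exists i, a i 0 != 0.
  apply/existsP; apply: contraR a_neq0; rewrite negb_exists => /forallP a0.
  by apply/eqP/matrixP => i j; rewrite !ord1 mxE; apply/eqP/negbNE/a0.
exists (\row_j (if j == i then (a i 0)^-1 else 0)).
apply/matrixP => ? ?; rewrite !ord1 !mxE (bigD1 i) //= big1 => [|j /negbTE ji].
  by rewrite mxE eqxx addr0 mulVr //; apply: hD.
by rewrite mxE ji mul0r.
Qed.

Lemma mx_linv_or_factor n r (A : 'M[D]_(n, r.+1)) :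
  (exists A' : 'M[D]_(r.+1, n), A' *m A = 1%:M) \/
  (exists (A2 : 'M[D]_(n, r)) (C : 'M[D]_(r, r.+1)), A = A2 *m C).
Proof.
elim: r A => [|r IH] A.
  have [->|A_neq0] := eqVneq A 0; last by left; apply: col_linv.
  by right; exists 0, 0; rewrite mul0mx.
pose A0 : 'M[D]_(n, 1 + r.+1) := A.
have -> : A = row_mx (lsubmx A0) (rsubmx A0) by rewrite hsubmxK.
move: (lsubmx A0) (rsubmx A0) => a A1 {A0 A}.
have [->|a_neq0] := eqVneq a 0.
  right; exists A1, (row_mx (0 : 'M_(r.+1, 1)) 1%:M).
  by have := mul_mx_row A1 (0 : 'M_(r.+1, 1)) 1%:M; rewrite mulmx0 mulmx1.
have [w wa] := col_linv a_neq0.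
pose A1' := A1 - a *m (w *m A1).
have wA1' : w *m A1' = 0 by rewrite mulmxBr (mulmxA w a) wa mul1mx subrr.
have A1E : A1 = A1' + a *m (w *m A1) by rewrite subrK.
have [[L LA1']|[A2 [C A1'E]]] := IH A1'.
  left; pose L2 := L - L *m a *m w.
  have L2a : L2 *m a = 0 by rewrite mulmxBl -(mulmxA (L *m a)) wa mulmx1 subrr.
  have L2A1 : L2 *m A1 = 1%:M.
    rewrite A1E mulmxDr mulmxA L2a mul0mx addr0.
    by rewrite mulmxBl LA1' -!mulmxA wA1' !mulmx0 subr0.
  exists (col_mx (w - w *m A1 *m L2) L2).
  change (col_mx (w - w *m A1 *m L2) L2 *m (row_mx a A1 : 'M_(n, 1 + r.+1))
          = 1%:M :> 'M_(1 + r.+1)).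
  rewrite mul_col_row L2a L2A1 !mulmxBl -!mulmxA L2a L2A1 !mulmx0 subr0 wa.
  by rewrite mulmx1 subrr -scalar_mx_block.
right; exists (row_mx a A2), (block_mx 1%:M (w *m A1) 0 C).
change ((row_mx a A1 : 'M_(n, 1 + r.+1)) =
        (row_mx a A2 : 'M_(n, 1 + r)) *m block_mx (1%:M : 'M_1) (w *m A1) 0 C).
by rewrite mul_row_block mulmx1 mulmx0 addr0 -A1'E addrC -A1E.
Qed.

End DivisionRingMatrices.

(* Transposition exchanges left and right inverses over the converse ring. *)
Lemma mx_rinv_or_factor (D : unitRingType) (hD : is_division_ring D) m r
    (B : 'M[D]_(r.+1, m)) :
  (exists B' : 'M[D]_(m, r.+1), B *m B' = 1%:M) \/
  (exists (C : 'M[D]_(r.+1, r)) (B2 : 'M[D]_(r, m)), B = C *m B2).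
Proof.
have [[B' B'B]|[B2 [C BE]]] :=
  @mx_linv_or_factor D^c hD m r (B : 'M[D^c]_(r.+1, m))^T.
  left; exists (B'^T : 'M[D]_(m, r.+1)); apply: trmx_inj.
  by rewrite trmx_mul_rev !trmxK B'B trmx1.
right; exists (C^T : 'M[D]_(r.+1, r)), (B2^T : 'M[D]_(r, m)); apply: trmx_inj.
by rewrite trmx_mul_rev !trmxK.
Qed.

Lemma mx_rank_corner (D : unitRingType) (hD : is_division_ring D) n m r
    (P : 'M[D]_(n, m)) :
  mx_rank_is P r.+1 ->
  exists (K : 'M[D]_(r.+1, n)) (L : 'M[D]_(m, r.+1)), K *m P *m L = 1%:M.
Proof.
case=> [[A [B ->]] Pmin].
have [[A' A'A]|[A2 [C AE]]] := mx_linv_or_factor hD A; last first.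
  by case: (Pmin r (ltnSn r)); exists A2, (C *m B); rewrite AE mulmxA.
have [[B' BB']|[C [B2 BE]]] := mx_rinv_or_factor hD B; last first.
  by case: (Pmin r (ltnSn r)); exists (A *m C), B2; rewrite BE mulmxA.
by exists A', B'; rewrite mulmxA A'A mul1mx BB'.
Qed.

Lemma corner_shrink (D : pzRingType) n m k j (P : 'M[D]_(n, m))
    (K : 'M[D]_(k, n)) (L : 'M[D]_(m, k)) :
  K *m P *m L = 1%:M -> (j <= k)%N ->
  exists (K' : 'M[D]_(j, n)) (L' : 'M[D]_(m, j)), K' *m P *m L' = 1%:M.
Proof.
move=> KPL le_jk; exists (pid_mx j *m K), (L *m pid_mx j).
rewrite !mulmxA -(mulmxA _ K) -(mulmxA _ (K *m P)) KPL mulmx1.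
by rewrite mul_pid_mx minnn (minn_idPr le_jk) pid_mx_1.
Qed.

Lemma mx2_commutator_sqr1 (D : pzRingType) :
  let p := delta_mx 1 0 - delta_mx 0 1 : 'M[D]_2 in
  let s := delta_mx 0 0 : 'M[D]_2 in
  (p *m s - s *m p) *m (p *m s - s *m p) = 1%:M.
Proof.
move=> p s.
have -> : p *m s - s *m p = delta_mx 1 0 + delta_mx 0 1.
  by rewrite mulmxBl mulmxBr !mul_delta_mx_cond /= !mulr1n !mulr0n subr0 sub0r opprK.
rewrite mulmxDl !mulmxDr !mul_delta_mx_cond /= !mulr1n !mulr0n addr0 add0r.
by rewrite mx1_sum_delta big_ord_recr big_ord1 addrC.
Qed.

Lemma mx11_comm (D : pzRingType) (u v : 'M[D]_1) :
  (forall x y : D, x * y = y * x) -> u *m v = v *m u.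
Proof. by move=> DC; apply/matrixP => i j; rewrite !ord1 !mxE !big_ord1 DC. Qed.

Lemma rank1_sandwich_sum_comm_comm_eq0 (D : pzRingType) m n
    (A : 'cV[D]_n) (B : 'rV[D]_m) (X : 'M[D]_(m, n)) :
  (forall x y : D, x * y = y * x) ->
  in_sum_comm_comm (A *m B) X -> B *m X *m A = 0.
Proof.
move=> DC [s ->].
have hom Y Z : B *m sprod (A *m B) Y Z *m A = (B *m Y *m A) *m (B *m Z *m A).
  by rewrite /sprod !mulmxA.
have comm0 Y Z : B *m scomm (A *m B) Y Z *m A = 0.
  by rewrite /scomm mulmxBr mulmxBl !hom mx11_comm // subrr.
by rewrite mulmx_sumr mulmx_suml big1 // => t _; rewrite hom comm0 mul0mx.
Qed.

Lemma in_sum_comm_comm_rank_ge2 (D : unitRingType) (hD : is_division_ring D)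
    m n (P : 'M[D]_(n, m)) r (Pr : mx_rank_is P r) :
  (2 <= r)%N -> forall X, in_sum_comm_comm P X.
Proof.
case: r Pr => [//|r] Pr r_ge2 X.
have [K [L KPL]] := mx_rank_corner hD Pr.
have [K2 [L2 KPL2]] := corner_shrink KPL r_ge2.
apply: (in_sum_comm_comm_of_corner KPL2 (h := 1%:M)
  (P0 := delta_mx 1 0 - delta_mx 0 1) (R0 := delta_mx 1 0 - delta_mx 0 1)
  (S0 := delta_mx 0 0));
by rewrite ?mul1mx ?mulmx1 (mx2_commutator_sqr1 D).
Qed.

Lemma in_sum_comm_comm_rank1_noncomm (D : unitRingType) (hD : is_division_ring D)
    m n (P : 'M[D]_(n, m)) (P1 : mx_rank_is P 1) :
  ~ (forall x y : D, x * y = y * x) -> forall X, in_sum_comm_comm P X.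
Proof.
move=> D_noncomm X; have [K [L KPL]] := mx_rank_corner hD P1.
have [x [y xy_neq]] : exists x y : D, x * y != y * x.
  apply: NNPP => none; apply: D_noncomm => x y.
  by apply/eqP/negPn/negP => xy; apply: none; exists x, y.
pose c := x * y - y * x.
have c_unit : c \is a GRing.unit by apply: hD; rewrite subr_eq0.
have cE : x%:M *m y%:M - y%:M *m x%:M = c%:M :> 'M[D]_1.
  by rewrite -!scalar_mxM -raddfB.
apply: (in_sum_comm_comm_of_corner KPL (P0 := x%:M) (R0 := x%:M) (S0 := y%:M)
  (h := (c^-1 * c^-1)%:M)); rewrite cE -!scalar_mxM.
  by rewrite mulrA -(mulrA c^-1) mulVr // mulr1 mulVr.
by rewrite -mulrA (mulrA c c^-1) mulrV // mul1r mulrV.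
Qed.

Lemma not_in_sum_comm_comm_rank1_comm (D : unitRingType) (hD : is_division_ring D)
    m n (P : 'M[D]_(n, m)) (P1 : mx_rank_is P 1) :
  (forall x y : D, x * y = y * x) -> ~ (forall X, in_sum_comm_comm P X).
Proof.
move=> DC all_in; have [K [L KPL]] := mx_rank_corner hD P1.
have [[A [B PE]] _] := P1.
have KA_BL : K *m A *m (B *m L) = 1%:M by rewrite mulmxA -(mulmxA K) -PE.
have := all_in (L *m K); rewrite PE => /(rank1_sandwich_sum_comm_comm_eq0 DC).
rewrite mulmxA -(mulmxA (B *m L)) (mx11_comm _ _ DC) KA_BL => /matrixP/(_ 0 0).
by rewrite !mxE /= => /eqP; rewrite oner_eq0.
Qed.

Theorem theorem2p5 (D : unitRingType) (hD : is_division_ring D)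
  (m n : nat) (hm : (2 <= m)%N) (hn : (2 <= n)%N)
  (P : 'M[D]_(n, m)) (r : nat) (hr : mx_rank_is P r) :
  ((2 <= r)%N -> forall X : 'M[D]_(m, n), in_sum_comm_comm P X) /\
  (r = 1%N ->
     ((forall X : 'M[D]_(m, n), in_sum_comm_comm P X) <->
      ~ (forall x y : D, x * y = y * x))).
Proof.
split; first exact (in_sum_comm_comm_rank_ge2 hD hr).
move=> r1; subst r; split=> [all_in DC|].
  exact (not_in_sum_comm_comm_rank1_comm hD hr DC all_in).
exact (in_sum_comm_comm_rank1_noncomm hD hr).
Qed.
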